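(* Let $\mathcal{X}=L^p$ for some $p\in\{0,1,\infty\}$ and let $\varphi$ be a dynamic LM-measure on $\mathcal{X}$. The following are equivalent: (1) $\varphi$ is weakly acceptance time consistent, i.e. for all $X\in\mathcal{X}$, $s,t\in\mathbb{T}$ with $s>t$, and $m_s\in\bar L^0_s$: $\varphi_s(X)\ge m_s\Rightarrow \varphi_t(X)\ge\operatorname{Essinf}_t(m_s)$; (2) for all $X\in\mathcal{X}$ and $s>t$: $\varphi_t(X)\ge\operatorname{Essinf}_t\varphi_s(X)$; (3) for all $X\in\mathcal{X}$, $s>t$ and $m_t\in\bar L^0_t$: $\varphi_s(X)\ge m_t\Rightarrow\varphi_t(X)\ge m_t$. If in addition $\varphi$ is a dynamic monetary utility measure, these are also equivalent to: (4) for all $X\in\mathcal{X}$ and $s>t$: $\varphi_s(X)\ge0\Rightarrow\varphi_t(X)\ge0$. Analogously, the following are equivalent: (1') $\varphi$ is weakly rejection time consistent, i.e. $\varphi_s(X)\le m_s\Rightarrow\varphi_t(X)\le\operatorname{Esssup}_t(m_s)$ for all $X$, $s>t$, $m_s\in\bar L^0_s$; (2') $\varphi_t(X)\le\operatorname{Esssup}_t\varphi_s(X)$ for all $X$, $s>t$; (3') $\varphi_s(X)\le m_t\Rightarrow\varphi_t(X)\le m_t$ for all $X$, $s>t$, $m_t\in\bar L^0_t$; and, if $\varphi$ is a dynamic monetary utility measure, also (4') $\varphi_s(X)\le0\Rightarrow\varphi_t(X)\le0$ for all $X$, $s>t$.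
   Context: Let $(\Omega,\mathcal{F},\{\mathcal{F}_t\}_{t\in\mathbb{T}},P)$ be a filtered probability space, $\mathbb{T}=\{0,1,\dots,T\}$, $\mathcal{F}_0$ trivial. $\bar L^0_t$ denotes $\mathcal{F}_t$-measurable random variables with values in $[-\infty,\infty]$; $L^p_t=L^p(\Omega,\mathcal{F}_t,P)$, $L^p=L^p_T$, ordered pointwise a.s. Conventions: $\infty-\infty=-\infty$, $0\cdot\pm\infty=0$. A dynamic LM-measure is a family $\{\varphi_t\}_{t\in\mathbb{T}}$ of maps $\varphi_t:\mathcal{X}\to\bar L^0_t$ with $1_A\varphi_t(X)=1_A\varphi_t(1_AX)$ for all $A\in\mathcal{F}_t$ and $X\le Y\Rightarrow\varphi_t(X)\le\varphi_t(Y)$. A dynamic monetary utility measure is a dynamic LM-measure with $\varphi_t(0)=0$ and $\varphi_t(X+c_t)=\varphi_t(X)+c_t$ for all $t\in\mathbb{T}$, $X\in\mathcal{X}$, $c_t\in L^\infty_t$. For bounded $X$, $\operatorname{Essinf}_tX$ is the largest $\mathcal{F}_t$-measurable random variable a.s. dominated by $X$ (equivalently the unique $\mathcal{F}_t$-measurable $U$ with $\operatorname{essinf}_{A}X=\operatorname{essinf}_{A}U$ for all $A\in\mathcal{F}_t$), and $\operatorname{Esssup}_tX=-\operatorname{Essinf}_t(-X)$; for $X\in\bar L^0_T$ set $\operatorname{Essinf}_tX:=\lim_{n}\operatorname{Essinf}_t(X^+\wedge n)-\lim_n\operatorname{Esssup}_t(X^-\wedge n)$ and $\operatorname{Esssup}_tX:=-\operatorname{Essinf}_t(-X)$,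 where $X^+=X\vee0$, $X^-=(-X)\vee0$. *)

From HB Require Import structures.
From mathcomp Require Import all_boot all_order all_algebra.
From mathcomp Require Import all_classical all_reals all_analysis measurable_realfun.
From Stdlib Require Import ClassicalEpsilon.
Set Implicit Arguments. Unset Strict Implicit. Unset Printing Implicit Defensive.
Import Order.TTheory GRing.Theory Num.Theory.
Local Open Scope classical_set_scope.
Local Open Scope ring_scope.
Local Open Scope ereal_scope.

Section Defs.
Context {R : realType} {d : measure_display} {T : measurableType d}.
Variable P : probability T R.

Definition Gmeas (G : set (set T)) (f : T -> \bar R) : Prop :=
  forall B : set (\bar R), measurable B -> G (f @^-1` B).

Definition filtration (Tend : nat) (F : nat -> set (set T)) : Prop :=
  [/\ (forall t, (t <= Tend)%N -> sigma_algebra setT (F t)),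
      (forall t, (t <= Tend)%N -> F t `<=` measurable),
      (forall s t, (s <= t)%N -> (t <= Tend)%N -> F s `<=` F t) &
      (forall A, F 0%N A -> A = set0 \/ A = setT)].

Inductive Lp_index := Lp0 | Lp1 | Lpinf.

Definition inLp (G : set (set T)) (p : Lp_index) (X : T -> R) : Prop :=
  Gmeas G (fun w => (X w)%:E) /\
  match p with
  | Lp0 => True
  | Lp1 => P.-integrable setT (fun w => (X w)%:E)
  | Lpinf => exists C : R, {ae P, forall w, (`|X w| <= C)%R}
  end.

Definition is_EssinfB (G : set (set T)) (X U : T -> \bar R) : Prop :=
  [/\ Gmeas G U, {ae P, forall w, U w <= X w} &
      forall V, Gmeas G V -> {ae P, forall w, V w <= X w} ->
        {ae P, forall w, V w <= U w}].

Definition EssinfB (G : set (set T)) (X : T -> \bar R) : T -> \bar R :=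
  epsilon (inhabits (fun _ => -oo)) (is_EssinfB G X).

Definition EsssupB (G : set (set T)) (X : T -> \bar R) : T -> \bar R :=
  fun w => - EssinfB G (fun v => - X v) w.

(** General extended-valued X:
    Essinf X := lim_n Essinf (X^+ ∧ n) - lim_n Esssup (X^- ∧ n)
    (with the MathComp convention +oo - +oo = -oo). *)
Definition Essinf (G : set (set T)) (X : T -> \bar R) : T -> \bar R :=
  fun w =>
    limn (fun n : nat => EssinfB G (fun v => mine (maxe (X v) 0) n%:R%:E) w)
    - limn (fun n : nat => EsssupB G (fun v => mine (maxe (- X v) 0) n%:R%:E) w).

Definition Esssup (G : set (set T)) (X : T -> \bar R) : T -> \bar R :=
  fun w => - Essinf G (fun v => - X v) w.

(** Dynamic LM-measure on X = L^p(F_Tend) (values outside X are irrelevant). *)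
Definition dynamic_LM (Tend : nat) (F : nat -> set (set T)) (p : Lp_index)
  (phi : nat -> (T -> R) -> (T -> \bar R)) : Prop :=
  [/\ (forall t X, (t <= Tend)%N -> inLp (F Tend) p X -> Gmeas (F t) (phi t X)),
      (forall t A X, (t <= Tend)%N -> F t A -> inLp (F Tend) p X ->
         {ae P, forall w, (\1_A w)%:E * phi t X w =
                          (\1_A w)%:E * phi t (fun v => \1_A v * X v)%R w}) &
      (forall t X Y, (t <= Tend)%N -> inLp (F Tend) p X -> inLp (F Tend) p Y ->
         {ae P, forall w, (X w <= Y w)%R} ->
         {ae P, forall w, phi t X w <= phi t Y w})].

Definition dynamic_MUM (Tend : nat) (F : nat -> set (set T)) (p : Lp_index)
  (phi : nat -> (T -> R) -> (T -> \bar R)) : Prop :=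
  [/\ dynamic_LM Tend F p phi,
      (forall t, (t <= Tend)%N -> {ae P, forall w, phi t (fun _ => 0%R) w = 0}) &
      (forall t X c, (t <= Tend)%N -> inLp (F Tend) p X -> inLp (F t) Lpinf c ->
         {ae P, forall w, phi t (fun v => X v + c v)%R w = phi t X w + (c w)%:E})].

Definition cond1 Tend F p (phi : nat -> (T -> R) -> (T -> \bar R)) : Prop :=
  forall X s t (m : T -> \bar R), inLp (F Tend) p X -> (t < s)%N -> (s <= Tend)%N ->
    Gmeas (F s) m -> {ae P, forall w, phi s X w >= m w} ->
    {ae P, forall w, phi t X w >= Essinf (F t) m w}.
Definition cond2 Tend F p (phi : nat -> (T -> R) -> (T -> \bar R)) : Prop :=
  forall X s t, inLp (F Tend) p X -> (t < s)%N -> (s <= Tend)%N ->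
    {ae P, forall w, phi t X w >= Essinf (F t) (phi s X) w}.
Definition cond3 Tend F p (phi : nat -> (T -> R) -> (T -> \bar R)) : Prop :=
  forall X s t (m : T -> \bar R), inLp (F Tend) p X -> (t < s)%N -> (s <= Tend)%N ->
    Gmeas (F t) m -> {ae P, forall w, phi s X w >= m w} ->
    {ae P, forall w, phi t X w >= m w}.
Definition cond4 Tend (F : nat -> set (set T)) p
  (phi : nat -> (T -> R) -> (T -> \bar R)) : Prop :=
  forall X s t, inLp (F Tend) p X -> (t < s)%N -> (s <= Tend)%N ->
    {ae P, forall w, phi s X w >= 0} -> {ae P, forall w, phi t X w >= 0}.

Definition cond1' Tend F p (phi : nat -> (T -> R) -> (T -> \bar R)) : Prop :=
  forall X s t (m : T -> \bar R), inLp (F Tend) p X -> (t < s)%N -> (s <= Tend)%N ->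
    Gmeas (F s) m -> {ae P, forall w, phi s X w <= m w} ->
    {ae P, forall w, phi t X w <= Esssup (F t) m w}.
Definition cond2' Tend F p (phi : nat -> (T -> R) -> (T -> \bar R)) : Prop :=
  forall X s t, inLp (F Tend) p X -> (t < s)%N -> (s <= Tend)%N ->
    {ae P, forall w, phi t X w <= Esssup (F t) (phi s X) w}.
Definition cond3' Tend F p (phi : nat -> (T -> R) -> (T -> \bar R)) : Prop :=
  forall X s t (m : T -> \bar R), inLp (F Tend) p X -> (t < s)%N -> (s <= Tend)%N ->
    Gmeas (F t) m -> {ae P, forall w, phi s X w <= m w} ->
    {ae P, forall w, phi t X w <= m w}.
Definition cond4' Tend (F : nat -> set (set T)) p
  (phi : nat -> (T -> R) -> (T -> \bar R)) : Prop :=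
  forall X s t, inLp (F Tend) p X -> (t < s)%N -> (s <= Tend)%N ->
    {ae P, forall w, phi s X w <= 0} -> {ae P, forall w, phi t X w <= 0}.

End Defs.

(* The conditional essential infimum of a bounded variable is built by exhaustion: for each
   rational level r take a maximal G-set on which X >= r a.s.; the supremum of the levels
   attained is the largest G-measurable minorant. Passing to the limit in the clipped positive
   and negative parts, Essinf_G Y is a.s. a G-measurable minorant of Y that dominates every
   other one. Then (1) => (2) takes m_s = phi_s X, (2) => (3) uses m_t <= Essinf_t (phi_s X),
   and (3) => (1) applies (3) to a measurable version of Essinf_t m_s. For a monetary utility
   measure, locality and cash additivity give phi_u (1_A X - 1_A c) = 1_A (phi_u X - c) for
   A in F_t and bounded F_t-measurable c, so (4) transports c <= phi_s X on A to time t;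
   truncating m_t gives (3). The primed statements are the unprimed ones for the dual
   measure X |-> - phi (- X). *)

From HB Require Import structures.
From mathcomp Require Import all_boot all_order all_algebra.
From mathcomp Require Import all_classical all_reals all_analysis measurable_realfun.
From Stdlib Require Import ClassicalEpsilon.
Set Implicit Arguments. Unset Strict Implicit. Unset Printing Implicit Defensive.
Import Order.TTheory GRing.Theory Num.Theory.
Local Open Scope classical_set_scope.
Local Open Scope ring_scope.
Local Open Scope ereal_scope.

Section extended_reals.
Context {R : realType}.

Definition enum_rat (k : nat) : R := ratr (odflt 0%Q (unpickle k)).

Lemma enum_rat_dense (x y : \bar R) : x < y -> exists k, x < (enum_rat k)%:E < y.
Proof.
have between (a b : R) : (a < b)%R -> exists k, (a < enum_rat k < b)%R.
  move=> /rat_in_itvoo[q]; rewrite in_itv /= => hq.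
  by exists (pickle q); rewrite /enum_rat pickleK.
case: x => [a| |]; case: y => [b| |] //=.
- by rewrite lte_fin => /between[k hk]; exists k; rewrite !lte_fin.
- move=> _; have [k /andP[ak _]] := between a (a + 1)%R ltac:(by rewrite ltrDl).
  by exists k; rewrite lte_fin ak ltry.
- move=> _; have [k /andP[_ kb]] := between (b - 1)%R b ltac:(by rewrite gtrBl).
  by exists k; rewrite lte_fin kb ltNyr.
- by move=> _; have [k _] := between 0%R 1%R ltr01; exists k; rewrite ltry ltNyr.
Qed.

Lemma ge_nat_eqy (z : \bar R) : (forall n : nat, n%:R%:E <= z) -> z = +oo.
Proof.
case: z => [r| |] zge //; last by have := zge 0%N; rewrite leeNy_eq.
by have := zge (Num.truncn r).+1; rewrite lee_fin leNgt truncnS_gt.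
Qed.

Lemma le_mine_nat (x z : \bar R) : (forall n : nat, mine x n%:R%:E <= z) -> x <= z.
Proof.
case: x => [r| |] xz; last by rewrite leNye.
  by have := xz (Num.truncn r).+1; rewrite /mine lte_fin truncnS_gt.
by rewrite (ge_nat_eqy (z:=z)) ?leey // => n; have := xz n; rewrite /mine ltey.
Qed.

Lemma le_clip_nat (x z : \bar R) :
  (forall n : nat, (- n%:R)%:E <= x -> maxe (mine x n%:R%:E) (- n%:R)%:E <= z) ->
  x <= z.
Proof.
case: x => [r| |] xz; last by rewrite leNye.
  pose n := (Num.truncn `|r|).+1.
  have /andP[nr rn] : ((- n%:R)%:E <= r%:E <= n%:R%:E).
    by rewrite !lee_fin -ler_norml ltW // truncnS_gt.
  by have := xz n nr; rewrite (min_l rn) (max_l nr).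
rewrite (ge_nat_eqy (z:=z)) ?leey // => k; apply: le_trans _ (xz k (leey _)).
by rewrite (min_r (leey _)) le_max lexx.
Qed.

Lemma ereal_posneg (x : \bar R) : x = maxe x 0 - maxe (- x) 0.
Proof.
by have := congr1 (@^~ tt) (funeposneg (fun _ : unit => x)); rewrite funeposE funenegE.
Qed.

Lemma limn_nondecreasing (u : (\bar R)^nat) : (forall n, u n <= u n.+1) ->
  (forall n, u n <= limn u) /\ (forall z, (forall n, u n <= z) -> limn u <= z).
Proof.
move=> /nondecreasing_seqP/ereal_nondecreasing_cvgn/cvg_lim-> //; split.
  by move=> n; apply: ereal_sup_ubound; exists n.
by move=> z uz; apply: ge_ereal_sup => _ [n _ <-].
Qed.

End extended_reals.

Section essential_infimum.
Context {R : realType} {d : measure_display} {T : measurableType d}.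
Variable P : probability T R.

Lemma measure_exhaustion (S : set (set T)) : S `<=` measurable -> S set0 ->
  (forall A : (set T)^nat, (forall n, S (A n)) -> S (\bigcup_n A n)) ->
  exists2 A, S A & forall B, S B -> P (B `\` A) = 0.
Proof.
move=> Sm S0 SU.
pose s := ereal_sup [set P A | A in S].
have [u Su cu] : {u : (\bar R)^nat | forall n, [set P A | A in S] (u n) &
    u @ \oo --> s}.
  by apply: ereal_sup_seq; apply/set0P; exists (P set0), set0.
have /choice[A SA] : forall n, exists A, S A /\ P A = u n.
  by move=> n; have [A SAn <-] := Su n; exists A.
pose Amax := \bigcup_n A n.
have SAmax : S Amax by apply: SU => n; case: (SA n).
have mAmax : measurable Amax by exact: Sm.
have PAmax : P Amax = s.
  apply/eqP; rewrite eq_le ereal_sup_ubound /=; last by exists Amax.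
  rewrite -(cvg_lim _ cu) //; apply: lime_le; first by apply/cvg_ex; exists s.
  apply: nearW => n; case: (SA n) => SAn <-.
  by apply: le_measure; rewrite ?inE //; [exact: Sm|exact: bigcup_sup].
exists Amax => // B SB.
have mB : measurable B by exact: Sm.
have SAB : S (Amax `|` B).
  rewrite -bigcup2E; apply: SU => -[|[|n]] //=; exact: S0.
have PAB : P (Amax `|` B) = P Amax + P (B `\` Amax).
  by rewrite -measureU ?setDIK //; [rewrite setUDr setDv setD0|exact: measurableD].
have fin_Amax : P Amax \is a fin_num.
  by rewrite ge0_fin_numE // (le_lt_trans (probability_le1 _ mAmax)) ?ltry.
apply/eqP; rewrite eq_le measure_ge0 andbT -(leeD2lE _ _ fin_Amax) adde0 -PAB.
by rewrite PAmax; apply: ereal_sup_ubound; exists (Amax `|` B).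
Qed.

Variable G : set (set T).
Hypothesis sigmaG : sigma_algebra setT G.
Hypothesis measurableG : G `<=` measurable.

Lemma GmeasP (f : T -> \bar R) :
  Gmeas G f <-> measurable_fun (setT : set (g_sigma_algebraType G)) f.
Proof.
split=> [Gf _ B mB|mf B mB]; first by rewrite setTI measurable_g_measurableTypeE //; exact: Gf.
by have := mf measurableT B mB; rewrite setTI measurable_g_measurableTypeE.
Qed.

Lemma Gmeas_EFin (h : T -> R) :
  Gmeas G (fun w => (h w)%:E) <-> measurable_fun (setT : set (g_sigma_algebraType G)) h.
Proof. by rewrite GmeasP; exact: measurable_EFinP. Qed.

Lemma GmeasN (f : T -> \bar R) : Gmeas G f -> Gmeas G (fun w => - f w).
Proof. by move=> /GmeasP mf; apply/GmeasP; exact: measurableT_comp. Qed.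

Lemma Gmeas_ge (f : T -> \bar R) x : Gmeas G f -> G [set w | x <= f w].
Proof.
move=> Gf; have := Gf `[x, +oo[%classic (emeasurable_itv _).
by congr G; apply/seteqP; split=> w /=; rewrite in_itv /= andbT.
Qed.

Let G0 : G set0. Proof. by case: sigmaG. Qed.

Let G_bigcup (A : (set T)^nat) : (forall n, G (A n)) -> G (\bigcup_n A n).
Proof. by case: sigmaG => _ _; apply. Qed.

Lemma threshold_exhaustion (x : \bar R) (X : T -> \bar R) : exists2 A,
  G A /\ {ae P, forall w, A w -> x <= X w} &
  forall B, G B -> {ae P, forall w, B w -> x <= X w} -> {ae P, forall w, B w -> A w}.
Proof.
pose S := [set A | G A /\ {ae P, forall w, A w -> x <= X w}].
have [|||A SA Amax] := @measure_exhaustion S.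
- by move=> A [/measurableG].
- by split; last exact: nearW.
- move=> A SA; split; first by apply: G_bigcup => n; case: (SA n).
  by apply: filterS (ae_foralln (fun n => (SA n).2)) => w AX [n _]; exact: AX.
exists A => // B GB BX; exists (B `\` A); split.
- by apply: measurableD; apply: measurableG; [|case: SA].
- exact: Amax.
- by move=> w /= /not_implyP.
Qed.

Lemma is_EssinfB_exists (X : T -> \bar R) : exists U, is_EssinfB P G X U.
Proof.
have /choice[A HA] : forall k, exists A,
    (G A /\ {ae P, forall w, A w -> (enum_rat k)%:E <= X w}) /\
    forall B, G B -> {ae P, forall w, B w -> (enum_rat k)%:E <= X w} ->
      {ae P, forall w, B w -> A w}.
  by move=> k; have [A ? ?] := threshold_exhaustion (enum_rat k)%:E X; exists A.
pose u k w : \bar R := if `[< A k w >] then (enum_rat k)%:E else -oo.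
pose U w := esups (u ^~ w) 0%N.
have AU k w : A k w -> (enum_rat k)%:E <= U w.
  by move=> Akw; apply: ereal_sup_ubound; exists k => //; rewrite /u asboolT.
exists U; split.
- apply/GmeasP; apply: measurable_fun_esups => k.
  apply: measurable_fun_ifT => //; apply: (measurable_fun_bool true).
  rewrite setTI (_ : _ @^-1` _ = A k); last by apply/seteqP; split=> w /asboolP.
  by apply: sub_sigma_algebra; case: (HA k) => -[].
- apply: filterS (ae_foralln (fun k => (HA k).1.2)) => w AX.
  apply: ge_ereal_sup => _ [k _ <-]; rewrite /u.
  by case: (pselect (A k w)) => Akw; [rewrite asboolT //; exact: AX|rewrite asboolF ?leNye].
- move=> V GV VX.
  have VA k : {ae P, forall w, (enum_rat k)%:E <= V w -> A k w}.
    apply: (HA k).2; first exact: Gmeas_ge.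
    by apply: filterS VX => w VXw kV; exact: le_trans VXw.
  apply: filterS (ae_foralln VA) => w {}VA; rewrite leNgt; apply/negP.
  move=> /enum_rat_dense[k /andP[Uk kV]].
  by have := AU k w (VA k (ltW kV)); rewrite leNgt Uk.
Qed.

Lemma EssinfBP X : is_EssinfB P G X (EssinfB P G X).
Proof. by apply: epsilon_spec; exact: is_EssinfB_exists. Qed.

Lemma Gmeas_EssinfB X : Gmeas G (EssinfB P G X).
Proof. by case: (EssinfBP X). Qed.

Lemma EssinfB_le X : {ae P, forall w, EssinfB P G X w <= X w}.
Proof. by case: (EssinfBP X). Qed.

Lemma EssinfB_ge X V : Gmeas G V -> {ae P, forall w, V w <= X w} ->
  {ae P, forall w, V w <= EssinfB P G X w}.
Proof. by case: (EssinfBP X) => _ _; apply. Qed.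

Lemma le_EssinfB X Y : (forall w, X w <= Y w) ->
  {ae P, forall w, EssinfB P G X w <= EssinfB P G Y w}.
Proof.
move=> XY; apply: EssinfB_ge; first exact: Gmeas_EssinfB.
by apply: filterS (EssinfB_le X) => w /le_trans; apply.
Qed.

Lemma Gmeas_EsssupB X : Gmeas G (EsssupB P G X).
Proof. exact/GmeasN/Gmeas_EssinfB. Qed.

Lemma EsssupB_ge X : {ae P, forall w, X w <= EsssupB P G X w}.
Proof. by apply: filterS (EssinfB_le (fun v => - X v)) => w; rewrite leeNr. Qed.

Lemma EsssupB_le X V : Gmeas G V -> {ae P, forall w, X w <= V w} ->
  {ae P, forall w, EsssupB P G X w <= V w}.
Proof.
move=> GV XV; have VX : {ae P, forall w, - V w <= - X w}.
  by apply: filterS XV => w; rewrite leeN2.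
by apply: filterS (EssinfB_ge (GmeasN GV) VX) => w; rewrite leeNl.
Qed.

Lemma le_EsssupB X Y : (forall w, X w <= Y w) ->
  {ae P, forall w, EsssupB P G X w <= EsssupB P G Y w}.
Proof.
move=> XY; apply: EsssupB_le; first exact: Gmeas_EsssupB.
by apply: filterS (EsssupB_ge Y) => w; apply: le_trans.
Qed.

Let Gmeas_clip (f : T -> \bar R) n : Gmeas G f ->
  Gmeas G (fun w => mine (maxe (f w) 0) n%:R%:E).
Proof.
by move=> /GmeasP mf; apply/GmeasP; apply: measurable_mine => //; exact: measurable_maxe.
Qed.

Let clip_le (x : \bar R) n : mine (maxe x 0) n%:R%:E <= maxe x 0.
Proof. by rewrite ge_min lexx. Qed.

Let le_clip (x y : \bar R) n : x <= y -> mine (maxe x 0) n%:R%:E <= mine (maxe y 0) n%:R%:E.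
Proof. by move=> xy; apply: le_min2 => //; exact: le_max2. Qed.

Let clipS (x : \bar R) n : mine (maxe x 0) n%:R%:E <= mine (maxe x 0) n.+1%:R%:E.
Proof. by apply: le_min2 => //; rewrite lee_fin ler_nat. Qed.

Let ess_pos Y n w := EssinfB P G (fun v => mine (maxe (Y v) 0) n%:R%:E) w.
Let ess_neg Y n w := EsssupB P G (fun v => mine (maxe (- Y v) 0) n%:R%:E) w.

Let EssinfE Y w : Essinf P G Y w = limn (ess_pos Y ^~ w) - limn (ess_neg Y ^~ w).
Proof. by []. Qed.

Let ess_pos_approx Y : {ae P, forall w,
  (forall n, ess_pos Y n w <= ess_pos Y n.+1 w) /\
  (forall n, ess_pos Y n w <= mine (maxe (Y w) 0) n%:R%:E)}.
Proof.
have posS := ae_foralln (fun n => le_EssinfB (fun w => clipS (Y w) n)).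
have pY := ae_foralln (fun n => EssinfB_le (fun v => mine (maxe (Y v) 0) n%:R%:E)).
exact: filterS2 posS pY.
Qed.

Let ess_neg_approx Y : {ae P, forall w,
  (forall n, ess_neg Y n w <= ess_neg Y n.+1 w) /\
  (forall n, mine (maxe (- Y w) 0) n%:R%:E <= ess_neg Y n w)}.
Proof.
have negS := ae_foralln (fun n => le_EsssupB (fun w => clipS (- Y w) n)).
have nY := ae_foralln (fun n => EsssupB_ge (fun v => mine (maxe (- Y v) 0) n%:R%:E)).
exact: filterS2 negS nY.
Qed.

Lemma Essinf_ge (m Y : T -> \bar R) : Gmeas G m ->
  {ae P, forall w, m w <= Y w} -> {ae P, forall w, m w <= Essinf P G Y w}.
Proof.
move=> Gm mY.
have m_bounds : {ae P, forall w, forall n,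
    mine (maxe (m w) 0) n%:R%:E <= ess_pos Y n w /\
    ess_neg Y n w <= mine (maxe (- m w) 0) n%:R%:E}.
  apply: ae_foralln => n.
  have mY_pos : {ae P, forall w, mine (maxe (m w) 0) n%:R%:E <= mine (maxe (Y w) 0) n%:R%:E}.
    by apply: filterS mY => w; exact: le_clip.
  have mY_neg : {ae P, forall w,
      mine (maxe (- Y w) 0) n%:R%:E <= mine (maxe (- m w) 0) n%:R%:E}.
    by apply: filterS mY => w mYw; apply: le_clip; rewrite leeN2.
  apply: filterS2 (EssinfB_ge (Gmeas_clip n Gm) mY_pos)
    (EsssupB_le (Gmeas_clip n (GmeasN Gm)) mY_neg) => w; exact: conj.
apply: filterS3 m_bounds (ess_pos_approx Y) (ess_neg_approx Y).
move=> w mb [posS _] [negS _].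
rewrite EssinfE (ereal_posneg (m w)); apply: leeB.
  apply: le_mine_nat => n; apply: le_trans (mb n).1 _.
  exact: (limn_nondecreasing posS).1.
apply: (limn_nondecreasing negS).2 => n; exact: le_trans (mb n).2 (clip_le _ _).
Qed.

Lemma Essinf_le Y : {ae P, forall w, Essinf P G Y w <= Y w}.
Proof.
apply: filterS2 (ess_pos_approx Y) (ess_neg_approx Y) => w [posS pY] [negS nY].
rewrite EssinfE [leRHS]ereal_posneg; apply: leeB.
  by apply: (limn_nondecreasing posS).2 => n; exact: le_trans (pY n) (clip_le _ _).
apply: le_mine_nat => n; apply: le_trans (nY n) _.
exact: (limn_nondecreasing negS).1.
Qed.

Lemma Essinf_version Y : exists2 m, Gmeas G m & {ae P, forall w, Essinf P G Y w = m w}.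
Proof.
exists (fun w => limn_esup (ess_pos Y ^~ w) - limn_esup (ess_neg Y ^~ w)).
  apply/GmeasP; apply: emeasurable_funB; apply: measurable_fun_limn_esup => n;
    apply/GmeasP; [exact: Gmeas_EssinfB|exact: Gmeas_EsssupB].
apply: filterS2 (ess_pos_approx Y) (ess_neg_approx Y) => w [posS _] [negS _].
by rewrite EssinfE !is_cvg_limn_esupE //; apply: ereal_nondecreasing_is_cvgn;
  exact/nondecreasing_seqP.
Qed.

End essential_infimum.

Section Lp_space.
Context {R : realType} {d : measure_display} {T : measurableType d}.
Variables (P : probability T R) (G : set (set T)) (q : Lp_index).
Hypothesis sigmaG : sigma_algebra setT G.
Hypothesis measurableG : G `<=` measurable.

Let measurable_EFin (h : T -> R) : Gmeas G (fun w => (h w)%:E) ->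
  measurable_fun setT (fun w => (h w)%:E).
Proof. by move=> Gh _ B mB; rewrite setTI; apply: measurableG; exact: Gh. Qed.

Lemma inLp_le (X Y : T -> R) : Gmeas G (fun w => (Y w)%:E) ->
  (forall w, (`|Y w| <= `|X w|)%R) -> inLp P G q X -> inLp P G q Y.
Proof.
move=> GY YX [GX X_Lp]; split=> //; case: q X_Lp => // [X_L1|[C XC]].
  apply: le_integrable X_L1 => //; first exact: measurable_EFin.
  by move=> w _; rewrite !abse_EFin lee_fin.
by exists C; apply: filterS XC => w; exact: le_trans.
Qed.

Lemma inLpN (X : T -> R) : inLp P G q X -> inLp P G q (fun w => - X w)%R.
Proof.
move=> X_Lp; have GX := X_Lp.1; apply: inLp_le X_Lp => [|w]; last by rewrite normrN.
have := GmeasN sigmaG GX; congr Gmeas; apply: funext => w; by rewrite EFinN.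
Qed.

Lemma inLp_indic (A : set T) (X : T -> R) : G A -> inLp P G q X ->
  inLp P G q (fun w => \1_A w * X w)%R.
Proof.
move=> GA X_Lp; have GX := X_Lp.1; apply: inLp_le X_Lp => [|w].
  apply/(Gmeas_EFin sigmaG); apply: measurable_funM; last exact/(Gmeas_EFin sigmaG).
  by apply: measurable_indic; exact: sub_sigma_algebra.
by rewrite normrM ler_piMl // indicE; case: (_ \in _); rewrite normr_nat.
Qed.

Lemma inLpinf_bounded (c : T -> R) C : Gmeas G (fun w => (c w)%:E) ->
  (forall w, (`|c w| <= C)%R) -> inLp P G Lpinf c.
Proof. by move=> Gc cC; split=> //; exists C; exact: nearW. Qed.

Lemma inLpD_bounded (X c : T -> R) C : inLp P G q X -> Gmeas G (fun w => (c w)%:E) ->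
  (forall w, (`|c w| <= C)%R) -> inLp P G q (fun w => X w + c w)%R.
Proof.
move=> [GX X_Lp] Gc cC; split.
  by apply/(Gmeas_EFin sigmaG); apply: measurable_funD; exact/(Gmeas_EFin sigmaG).
case: q X_Lp => // [X_L1|[C' XC']].
  rewrite (_ : (fun w => _) = (fun w => (X w)%:E) \+ (fun w => (c w)%:E)); last first.
    by apply: funext => w; rewrite EFinD.
  apply: (integrableD measurableT) => //.
  apply: (le_integrable measurableT (g := EFin \o cst C)).
  - exact: measurable_EFin.
  - by move=> w _ /=; rewrite lee_fin; apply: le_trans (cC w) (ler_norm _).
  - exact: finite_measure_integrable_cst.
exists (C' + C)%R; apply: filterS XC' => w XwC'.
by apply: le_trans (ler_normD _ _) _; apply: lerD.
Qed.

End Lp_space.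

Section time_consistency.
Context {R : realType} {d : measure_display} {T : measurableType d}.
Variables (P : probability T R) (Tend : nat) (F : nat -> set (set T)) (p : Lp_index).
Hypothesis filtrationF : filtration Tend F.

Let sigmaF t : (t <= Tend)%N -> sigma_algebra setT (F t).
Proof. by case: filtrationF => + _ _ _; apply. Qed.

Let measurableF t : (t <= Tend)%N -> F t `<=` measurable.
Proof. by case: filtrationF => _ + _ _; apply. Qed.

Let F_mono s t : (s <= t)%N -> (t <= Tend)%N -> F s `<=` F t.
Proof. by case: filtrationF => _ _ + _; apply. Qed.

Let sigmaFT := sigmaF (leqnn Tend).

Let leq_Tend t s : (t < s)%N -> (s <= Tend)%N -> (t <= Tend)%N.
Proof. by move=> ts sT; rewrite ltnW // (leq_trans ts sT). Qed.

Definition dual_measure (phi : nat -> (T -> R) -> (T -> \bar R)) :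
  nat -> (T -> R) -> (T -> \bar R) := fun t X w => - phi t (fun v => - X v)%R w.

Section weak_acceptance.
Variable phi : nat -> (T -> R) -> (T -> \bar R).
Hypothesis phiLM : dynamic_LM P Tend F p phi.

Lemma cond1_cond2 : cond1 P Tend F p phi -> cond2 P Tend F p phi.
Proof.
move=> c1 X s t X_Lp ts sT; apply: (c1 X s t (phi s X)) => //.
  by case: phiLM => + _ _; apply.
exact: nearW.
Qed.

Lemma cond2_cond3 : cond2 P Tend F p phi -> cond3 P Tend F p phi.
Proof.
move=> c2 X s t m X_Lp ts sT Gm m_le; have tT := leq_Tend ts sT.
apply: filterS2 (c2 X s t X_Lp ts sT) (Essinf_ge (sigmaF tT) (measurableF tT) Gm m_le).
by move=> w /[swap]; apply: le_trans.
Qed.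

Lemma cond3_cond1 : cond3 P Tend F p phi -> cond1 P Tend F p phi.
Proof.
move=> c3 X s t m X_Lp ts sT Gm m_le; have tT := leq_Tend ts sT.
have [m' Gm' m'E] := Essinf_version P (sigmaF tT) (measurableF tT) m.
have m'_le : {ae P, forall w, m' w <= phi s X w}.
  apply: filterS3 m'E (Essinf_le P (sigmaF tT) (measurableF tT) m) m_le.
  by move=> w <- /le_trans; apply.
by apply: filterS2 m'E (c3 X s t m' X_Lp ts sT Gm' m'_le) => w ->.
Qed.

Lemma cond123_equiv :
  (cond1 P Tend F p phi <-> cond2 P Tend F p phi) /\
  (cond2 P Tend F p phi <-> cond3 P Tend F p phi).
Proof.
have c12 := cond1_cond2; have c23 := cond2_cond3; have c31 := cond3_cond1.
by split; split; auto.
Qed.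

End weak_acceptance.

Section monetary_utility.
Variable phi : nat -> (T -> R) -> (T -> \bar R).
Hypothesis phiMUM : dynamic_MUM P Tend F p phi.

Lemma MUM_indic_shift u A X c C : (u <= Tend)%N -> F u A -> inLp P (F Tend) p X ->
  Gmeas (F u) (fun w => (c w)%:E) -> (forall w, (`|c w| <= C)%R) ->
  let Y := fun w => (\1_A w * X w + - (\1_A w * c w))%R in
  inLp P (F Tend) p Y /\
  {ae P, forall w, phi u Y w = (\1_A w)%:E * (phi u X w - (c w)%:E)}.
Proof.
move=> uT FA X_Lp Gc cC Y; case: phiMUM => -[_ local _] zero cash.
have Ac_bounded w : (`|- (\1_A w * c w)| <= C)%R.
  rewrite normrN normrM (le_trans _ (cC w)) // ler_piMl // indicE.
  by case: (_ \in _); rewrite normr_nat.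
have GAc : Gmeas (F u) (fun w => (- (\1_A w * c w))%:E).
  apply/(Gmeas_EFin (sigmaF uT)); apply/measurable_funN/measurable_funM.
    by apply: measurable_indic; exact: sub_sigma_algebra.
  exact/(Gmeas_EFin (sigmaF uT)).
have AX_Lp := inLp_indic sigmaFT (measurableF (leqnn _)) (F_mono uT (leqnn _) FA) X_Lp.
have Y_Lp : inLp P (F Tend) p Y.
  have GAcT : Gmeas (F Tend) (fun w => (- (\1_A w * c w))%:E).
    by move=> B mB; apply: (F_mono uT (leqnn _)); exact: GAc.
  have Y_Lp := inLpD_bounded sigmaFT (measurableF (leqnn _)) AX_Lp GAcT Ac_bounded.
  exact: Y_Lp.
have FAc : F u (~` A) by have [_ + _] := sigmaF uT; rewrite -setTD; apply.
have Y_off : (fun w => \1_(~` A) w * Y w)%R = (fun _ => 0%R).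
  apply: funext => w; rewrite /Y !indicE.
  case: (pselect (A w)) => Aw; first by rewrite memNset ?mul0r // => /(_ Aw).
  by rewrite (memNset Aw) !mul0r subr0 mulr0.
split=> //; near=> w.
have cashY : phi u Y w = phi u (fun w => \1_A w * X w)%R w + (- (\1_A w * c w))%:E.
  by near: w; exact: cash u _ _ uT AX_Lp (inLpinf_bounded P GAc Ac_bounded).
have localA : (\1_A w)%:E * phi u X w = (\1_A w)%:E * phi u (fun w => \1_A w * X w)%R w.
  by near: w; exact: local u A X uT FA X_Lp.
have localAc : (\1_(~` A) w)%:E * phi u Y w = (\1_(~` A) w)%:E * phi u (fun _ => 0%R) w.
  by rewrite -Y_off; near: w; exact: local u (~` A) Y uT FAc Y_Lp.
have zero_w : phi u (fun _ => 0%R) w = 0 by near: w; exact: zero u uT.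
case: (pselect (A w)) => Aw.
  move: localA; rewrite indicE mem_set // !mul1e => ->.
  by rewrite cashY indicE mem_set // mul1r EFinN.
move: localAc; rewrite !indicE mem_set // memNset // !mul1e mul0e => ->.
exact: zero_w.
Unshelve. all: by end_near.
Qed.

Lemma cond3_cond4 : cond3 P Tend F p phi -> cond4 P Tend F p phi.
Proof.
move=> c3 X s t X_Lp ts sT; apply: c3 => //.
by apply/(GmeasP (sigmaF (leq_Tend ts sT))); exact: measurable_cst.
Qed.

Lemma cond4_local X s t A c C : cond4 P Tend F p phi -> inLp P (F Tend) p X ->
  (t < s)%N -> (s <= Tend)%N -> F t A -> Gmeas (F t) (fun w => (c w)%:E) ->
  (forall w, (`|c w| <= C)%R) -> {ae P, forall w, A w -> (c w)%:E <= phi s X w} ->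
  {ae P, forall w, A w -> (c w)%:E <= phi t X w}.
Proof.
move=> c4 X_Lp ts sT FA Gc cC c_le; have tT := leq_Tend ts sT.
have Fts : F t `<=` F s := F_mono (ltnW ts) sT.
have Gcs : Gmeas (F s) (fun w => (c w)%:E) by move=> B mB; apply: Fts; exact: Gc.
have [Y_Lp shift_s] := MUM_indic_shift sT (Fts _ FA) X_Lp Gcs cC.
have [_ shift_t] := MUM_indic_shift tT FA X_Lp Gc cC.
have Ys_ge0 : {ae P, forall w, 0 <= phi s (fun w => \1_A w * X w - \1_A w * c w)%R w}.
  apply: filterS2 shift_s c_le => w -> cw; rewrite indicE.
  case: (pselect (A w)) => [Aw|nAw]; last by rewrite memNset // mul0e.
  by rewrite mem_set // mul1e sube_ge0 //; exact: cw.
apply: filterS2 shift_t (c4 _ s t Y_Lp ts sT Ys_ge0) => w -> + Aw.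
by rewrite indicE mem_set // mul1e sube_ge0.
Qed.

Lemma cond4_cond3 : cond4 P Tend F p phi -> cond3 P Tend F p phi.
Proof.
move=> c4 X s t m X_Lp ts sT Gm m_le; have tT := leq_Tend ts sT.
pose clip n w := maxe (mine (m w) n%:R%:E) (- n%:R)%:E.
have clip_bound n w : (- n%:R)%:E <= clip n w <= n%:R%:E.
  rewrite le_max lexx orbT ge_max ge_min lexx orbT lee_fin.
  by apply: (@le_trans _ _ 0%R); rewrite ?oppr_le0 ler0n.
have clip_fin n w : clip n w \is a fin_num.
  have /andP[lo hi] := clip_bound n w.
  by rewrite fin_numElt (lt_le_trans (ltNyr _) lo) (le_lt_trans hi (ltry _)).
have clip_t n : {ae P, forall w, (- n%:R)%:E <= m w -> clip n w <= phi t X w}.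
  apply: filterS (cond4_local (c := fun w => fine (clip n w)) (C := n%:R) c4 X_Lp ts sT _ _ _ _).
  - by move=> w + mn => /(_ mn); rewrite fineK.
  - exact: Gmeas_ge.
  - rewrite (_ : (fun w => _) = clip n); last by apply: funext => w; rewrite fineK.
    apply/(GmeasP (sigmaF tT)); apply: measurable_maxe => //; apply: measurable_mine => //.
    exact/(GmeasP (sigmaF tT)).
  - by move=> w; rewrite ler_norml -!lee_fin fineK.
  - apply: filterS m_le => w mw mn; rewrite fineK // ge_max (le_trans mn mw) andbT.
    by rewrite ge_min mw.
apply: filterS (ae_foralln clip_t) => w; exact: le_clip_nat.
Qed.

Lemma MUM_cond34_equiv : cond3 P Tend F p phi <-> cond4 P Tend F p phi.
Proof. by split; [exact: cond3_cond4|exact: cond4_cond3]. Qed.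

End monetary_utility.

Section duality.
Variable phi : nat -> (T -> R) -> (T -> \bar R).

Let oppK (X : T -> R) : (fun w => - - X w)%R = X.
Proof. by apply: funext => w; rewrite opprK. Qed.

Let inLpN_T X : inLp P (F Tend) p X -> inLp P (F Tend) p (fun w => - X w)%R.
Proof. exact: inLpN sigmaFT (measurableF (leqnn _)) X. Qed.

Let dualN t X : dual_measure phi t (fun w => - X w)%R = (fun w => - phi t X w).
Proof. by rewrite /dual_measure oppK. Qed.

Lemma dynamic_LM_dual : dynamic_LM P Tend F p phi -> dynamic_LM P Tend F p (dual_measure phi).
Proof.
case=> meas local mono; split.
- by move=> t X tT X_Lp; exact: (GmeasN (sigmaF tT) (meas t _ tT (inLpN_T X_Lp))).
- move=> t A X tT FA X_Lp; apply: filterS (local t A _ tT FA (inLpN_T X_Lp)) => w.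
  rewrite /dual_measure !muleN => ->; congr (- (_ * phi t _ w)).
  by apply: funext => v; rewrite mulrN.
- move=> t X Y tT X_Lp Y_Lp XY.
  have NYX : {ae P, forall w, (- Y w <= - X w)%R} by apply: filterS XY => w; rewrite lerN2.
  by apply: filterS (mono t _ _ tT (inLpN_T Y_Lp) (inLpN_T X_Lp) NYX) => w; rewrite leeN2.
Qed.

Lemma dynamic_MUM_dual : dynamic_MUM P Tend F p phi -> dynamic_MUM P Tend F p (dual_measure phi).
Proof.
case=> LM zero cash; split; first exact: dynamic_LM_dual.
- move=> t tT; apply: filterS (zero t tT) => w; rewrite /dual_measure.
  by rewrite (_ : (fun _ => - 0)%R = (fun _ => 0%R)) ?oppr0 // => ->; rewrite oppe0.
- move=> t X c tT X_Lp c_Linf.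
  have := cash t _ _ tT (inLpN_T X_Lp) (inLpN (sigmaF tT) (measurableF tT) c_Linf).
  apply: filterS => w; rewrite /dual_measure.
  rewrite (_ : (fun v => - (X v + c v))%R = (fun v => - X v + - c v)%R); last first.
    by apply: funext => v; rewrite opprD.
  by move=> ->; rewrite oppeD ?fin_num_adde_defl // EFinN oppeK.
Qed.

Lemma cond1_dual : cond1' P Tend F p phi <-> cond1 P Tend F p (dual_measure phi).
Proof.
split=> c1 X s t m X_Lp ts sT Gm m_le.
  have m_le' : {ae P, forall w, phi s (fun w => - X w)%R w <= - m w}.
    by apply: filterS m_le => w; rewrite leeNr.
  apply: filterS (c1 _ s t _ (inLpN_T X_Lp) ts sT (GmeasN (sigmaF sT) Gm) m_le') => w.
  by rewrite /Esssup /dual_measure leeNr (_ : (fun v => - - m v) = m) // funeqE => v; rewrite oppeK.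
have m_le' : {ae P, forall w, - m w <= dual_measure phi s (fun w => - X w)%R w}.
  by apply: filterS m_le => w; rewrite dualN leeN2.
apply: filterS (c1 _ s t _ (inLpN_T X_Lp) ts sT (GmeasN (sigmaF sT) Gm) m_le') => w.
by rewrite dualN /Esssup leeNr.
Qed.

Lemma cond2_dual : cond2' P Tend F p phi <-> cond2 P Tend F p (dual_measure phi).
Proof.
split=> c2 X s t X_Lp ts sT.
  by apply: filterS (c2 _ s t (inLpN_T X_Lp) ts sT) => w; rewrite /Esssup leeNr.
by apply: filterS (c2 _ s t (inLpN_T X_Lp) ts sT) => w; rewrite !dualN /Esssup leeNr.
Qed.

Lemma cond3_dual : cond3' P Tend F p phi <-> cond3 P Tend F p (dual_measure phi).
Proof.
split=> c3 X s t m X_Lp ts sT Gm m_le; have GNm := GmeasN (sigmaF (leq_Tend ts sT)) Gm.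
  have m_le' : {ae P, forall w, phi s (fun w => - X w)%R w <= - m w}.
    by apply: filterS m_le => w; rewrite leeNr.
  by apply: filterS (c3 _ s t _ (inLpN_T X_Lp) ts sT GNm m_le') => w; rewrite leeNr.
have m_le' : {ae P, forall w, - m w <= dual_measure phi s (fun w => - X w)%R w}.
  by apply: filterS m_le => w; rewrite dualN leeN2.
by apply: filterS (c3 _ s t _ (inLpN_T X_Lp) ts sT GNm m_le') => w; rewrite dualN leeN2.
Qed.

Lemma cond4_dual : cond4' P Tend F p phi <-> cond4 P Tend F p (dual_measure phi).
Proof.
split=> c4 X s t X_Lp ts sT ge0.
  have le0 : {ae P, forall w, phi s (fun w => - X w)%R w <= 0}.
    by apply: filterS ge0 => w; rewrite oppe_ge0.
  by apply: filterS (c4 _ s t (inLpN_T X_Lp) ts sT le0) => w; rewrite oppe_ge0.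
have ge0' : {ae P, forall w, 0 <= dual_measure phi s (fun w => - X w)%R w}.
  by apply: filterS ge0 => w; rewrite dualN oppe_ge0.
by apply: filterS (c4 _ s t (inLpN_T X_Lp) ts sT ge0') => w; rewrite dualN oppe_ge0.
Qed.

End duality.

End time_consistency.

Theorem proposition4p3 (R : realType) (d : measure_display) (T : measurableType d)
  (P : probability T R) (Tend : nat) (F : nat -> set (set T)) (p : Lp_index)
  (phi : nat -> (T -> R) -> (T -> \bar R)) :
  filtration Tend F -> dynamic_LM P Tend F p phi ->
  ((cond1 P Tend F p phi <-> cond2 P Tend F p phi) /\
   (cond2 P Tend F p phi <-> cond3 P Tend F p phi) /\
   (dynamic_MUM P Tend F p phi -> (cond3 P Tend F p phi <-> cond4 P Tend F p phi))) /\
  ((cond1' P Tend F p phi <-> cond2' P Tend F p phi) /\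
   (cond2' P Tend F p phi <-> cond3' P Tend F p phi) /\
   (dynamic_MUM P Tend F p phi -> (cond3' P Tend F p phi <-> cond4' P Tend F p phi))).
Proof.
move=> filtrationF phiLM.
have [c12 c23] := cond123_equiv filtrationF phiLM.
have [d12 d23] := cond123_equiv filtrationF (dynamic_LM_dual filtrationF phiLM).
rewrite (cond1_dual P p filtrationF) (cond2_dual P p filtrationF).
rewrite (cond3_dual P p filtrationF) (cond4_dual P p filtrationF).
split; split=> //; split=> // phiMUM; apply: MUM_cond34_equiv => //.
exact: dynamic_MUM_dual.
Qed.
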